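(* If $T\in\mathcal{T}_3$ has $n\ge 4$ vertices and $t$ twigs then $\mu(T)<\frac{3n}{4}-\frac{2t}{5}$.
   Context: A leaf is a vertex of degree at most 1; an internal vertex has degree at least 2. $\mathcal{T}_3$ is the set of finite trees with at least one internal vertex in which every internal vertex has degree at least 3. A vertex $v$ is a twig if $d(v)\ge 2$ and at least $d(v)-1$ of its neighbours are leaves. A subtree is a nonempty vertex set inducing a connected subgraph; $\mu(T)$ is the average number of vertices over all subtrees of $T$. *)

From mathcomp Require Import all_boot all_order all_algebra.
Set Implicit Arguments. Unset Strict Implicit. Unset Printing Implicit Defensive.
Import Order.TTheory GRing.Theory Num.Theory.

Definition simple_graph (V : finType) (e : rel V) : Prop :=
  symmetric e /\ irreflexive e.

Definition deg (V : finType) (e : rel V) (v : V) : nat := #|[set u | e v u]|.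

(* the subgraph induced by S is connected (S nonempty is asked separately) *)
Definition induced_connected (V : finType) (e : rel V) (S : {set V}) : bool :=
  [forall x in S, forall y in S,
     connect [rel a b | [&& e a b, a \in S & b \in S]] x y].

(* A tree: nonempty, connected, with exactly |V| - 1 edges
   (the ordered pairs (u,v) with e u v number 2(|V|-1)). *)
Definition is_tree (V : finType) (e : rel V) : Prop :=
  simple_graph e /\ 0 < #|V| /\ induced_connected e [set: V] /\
  #|[set p : V * V | e p.1 p.2]| = 2 * (#|V| - 1).

Definition leaf (V : finType) (e : rel V) (v : V) : bool := deg e v <= 1.
Definition internal (V : finType) (e : rel V) (v : V) : bool := 2 <= deg e v.

Definition in_T3 (V : finType) (e : rel V) : Prop :=
  is_tree e /\ (exists v, internal e v) /\
  (forall v, internal e v -> 3 <= deg e v).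

Definition twig (V : finType) (e : rel V) (v : V) : bool :=
  (2 <= deg e v) && (deg e v - 1 <= #|[set u | e v u & leaf e u]|).

Definition num_twigs (V : finType) (e : rel V) : nat := #|[set v | twig e v]|.

Definition subtrees (V : finType) (e : rel V) : {set {set V}} :=
  [set S : {set V} | (S != set0) && induced_connected e S].

Definition mu (V : finType) (e : rel V) : rat :=
  (\sum_(S in subtrees e) #|S|)%:R / #|subtrees e|%:R.

(* Let N be the number of subtrees, c(v) the number of subtrees containing v
   and p(v) the number of leaf neighbours of v, so that the total order of
   all subtrees is the sum of the c(v).  A leaf x with neighbour u has
   2 c(x) = 2 + c(u), which turns twice the total order into
   2 L + sum over internal v of c(v) (p(v) + 2), L being the number of leaves.
   The claim 20 (total order) + 8 t N < 15 n N is then proved by giving each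
   internal vertex v the budget 5 (1 + 2 p(v) + d(v)) N; these budgets add up
   to 5 (3 n - 2) N, and the remaining 10 N exceeds 20 L since N >= n + L > 2 L.
   As d(v) >= 3, a vertex that is not a twig stays within its budget because
   c(v) <= N.  A twig v that is not the centre of a star has one internal
   neighbour and p(v) = d(v) - 1 leaf neighbours; the subtrees through v are
   those avoiding its leaf neighbours with any set of them added, and removing
   v from the former yields further subtrees, so c(v) (2^p + 1) <= 2^p N, which
   is enough.  Stars are checked directly. *)

From mathcomp Require Import all_boot all_order all_algebra.
From mathcomp Require Import zify ring lra.
Import Order.TTheory GRing.Theory Num.Theory.
Set Implicit Arguments. Unset Strict Implicit. Unset Printing Implicit Defensive.

Lemma uniq_path_interior (T : eqType) (r : rel T) x p y :
  path r x p -> uniq (x :: p) -> y \in p -> y != last x p ->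
  exists w z, [/\ r w y, r y z & w != z].
Proof.
move=> + + yp; case/splitPr: yp => p1 [|z p2]; first by rewrite last_cat /= eqxx.
rewrite cat_path => /andP[_ /andP[rwy /andP[ryz _]]] un _.
exists (last x p1), z; split=> //; apply/eqP => wz.
move: un; rewrite -(cat_cons x) cat_uniq -wz => /and3P[_ /hasPn/(_ (last x p1)) + _].
by rewrite !inE eqxx orbT -in_cons mem_last => /(_ isT).
Qed.

Lemma set1_neq_mem (T : finType) (S : {set T}) x :
  x \in S -> S != [set x] -> exists2 z, z \in S & z != x.
Proof.
move=> xS Sx; have /subsetPn[z zS] : ~~ (S \subset [set x]).
  by rewrite subset1 negb_or Sx -card_gt0 (cardD1 x) xS.
by rewrite in_set1; exists z.
Qed.

Lemma cardsU_disjoint (T : finType) (A B : {set T}) :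
  [disjoint A & B] -> #|A :|: B| = #|A| + #|B|.
Proof. by move=> dAB; apply/eqP; rewrite (leq_card_setU A B).2. Qed.

Section InducedConnectivity.

Variables (V : finType) (e : rel V).
Hypothesis e_sym : symmetric e.

Definition induced (S : {set V}) : rel V := [rel a b | [&& e a b, a \in S & b \in S]].

Lemma induced_connectedP (S : {set V}) :
  reflect (forall a b, a \in S -> b \in S -> connect (induced S) a b)
          (induced_connected e S).
Proof.
apply: (iffP forall_inP) => [conn a b aS | conn a aS].
  by have /forall_inP := conn a aS; apply.
by apply/forall_inP => b; apply: conn.
Qed.

Lemma connect_induced_sub (S T : {set V}) a b :
  S \subset T -> connect (induced S) a b -> connect (induced T) a b.
Proof.
move=> sST; apply: connect_sub => x y /and3P[exy xS yS].
by apply: connect1; rewrite /induced /= exy !(subsetP sST).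
Qed.

Lemma induced_connected_setU1 (S : {set V}) u x :
  induced_connected e S -> u \in S -> e u x -> induced_connected e (x |: S).
Proof.
move=> /induced_connectedP Sconn uS eux; apply/induced_connectedP.
have sub : S \subset x |: S by apply/subsetP => z zS; rewrite setU1r.
have link a : a \in x |: S -> connect (induced (x |: S)) a u /\ connect (induced (x |: S)) u a.
  case/setU1P => [->|aS]; last by split; apply: connect_induced_sub sub _; apply: Sconn.
  by split; apply: connect1; rewrite /induced /= ?(e_sym x) eux setU11 setU1r.
move=> a b /link[au _] /link[_ ub]; exact: connect_trans au ub.
Qed.

Lemma induced_connected_nbr (S : {set V}) x z :
  induced_connected e S -> x \in S -> z \in S -> z != x -> exists2 y, y \in S & e x y.
Proof.
move=> /induced_connectedP Sconn xS zS; have /connectP[[|y p] /=] := Sconn x z xS zS.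
  by move=> _ ->; rewrite eqxx.
by case/andP=> /and3P[exy _ yS] _ _ _; exists y.
Qed.

Lemma induced_path_sub (S : {set V}) x p :
  path (induced S) x p -> {subset p <= S}.
Proof.
elim: p x => //= y p IHp x /andP[/and3P[_ _ yS] /IHp pS] z.
by rewrite inE => /predU1P[->|/pS].
Qed.

(* A shortest path between two vertices of [S :\: Y] cannot pass through a
   vertex of [Y]: its two path neighbours would be distinct neighbours in [S]. *)
Lemma induced_connected_setD (S Y : {set V}) :
  (forall y a b, y \in Y -> a \in S -> b \in S -> e y a -> e y b -> a = b) ->
  induced_connected e S -> induced_connected e (S :\: Y).
Proof.
move=> Yuniq /induced_connectedP Sconn; apply/induced_connectedP => a b.
rewrite !inE => /andP[aY aS] /andP[bY bS].
have /connectP[p p_path b_last] := Sconn a b aS bS.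
move: b_last; case: (shortenP p_path) => q q_path q_uniq _ b_last {p p_path}.
have qS := induced_path_sub q_path.
have qY y : y \in q -> y \notin Y.
  move=> yq; apply: contraNN bY => yY; have [<-//|yb] := eqVneq y b.
  rewrite b_last in yb.
  have [w [z [/and3P[ewy wS _] /and3P[eyz _ zS] wz]]] := uniq_path_interior q_path q_uniq yq yb.
  by move: wz; rewrite (Yuniq y w z yY wS zS) ?eqxx // e_sym.
apply/connectP; exists q => //; apply: (sub_in_path (P := [predD S & Y])) q_path.
  by move=> x y /andP[xY xS] /andP[yY yS] /and3P[exy _ _]; rewrite /induced /= exy !inE xY xS yY yS.
by apply/allP => z; rewrite inE /= => /predU1P[->|zq]; rewrite ?aY ?aS ?qY ?qS.
Qed.

End InducedConnectivity.

Lemma leaf_nbr_uniq (V : finType) (e : rel V) x a b :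
  leaf e x -> e x a -> e x b -> a = b.
Proof. by move=> /card_le1_eqP x_leaf xa xb; apply: x_leaf; rewrite inE. Qed.

Section Subtrees.

Variables (V : finType) (e : rel V).
Hypotheses (e_sym : symmetric e) (e_irr : irreflexive e).

Lemma subtrees_set1 x : [set x] \in subtrees e.
Proof.
rewrite inE -card_gt0 cards1 /=; apply/induced_connectedP => a b.
by rewrite !inE => /eqP-> /eqP->; apply: connect0.
Qed.

Lemma subtrees_setU1 (S : {set V}) u x :
  S \in subtrees e -> u \in S -> e u x -> x |: S \in subtrees e.
Proof.
rewrite !inE => /andP[_ Sconn] uS eux.
apply/andP; split; first by apply/set0Pn; exists x; rewrite setU11.
exact: induced_connected_setU1 Sconn uS eux.
Qed.

Lemma subtrees_setD (S Y : {set V}) z :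
  (forall y a b, y \in Y -> a \in S -> b \in S -> e y a -> e y b -> a = b) ->
  S \in subtrees e -> z \in S -> z \notin Y -> S :\: Y \in subtrees e.
Proof.
move=> Yuniq; rewrite !inE => /andP[_ Sconn] zS zY.
apply/andP; split; first by apply/set0Pn; exists z; rewrite inE zY.
exact: induced_connected_setD Sconn.
Qed.

Definition subtrees_at (v : V) := [set S in subtrees e | v \in S].

Lemma subtrees_at_leaf_nbr x u S :
  leaf e x -> e x u -> S \in subtrees_at x -> S != [set x] -> u \in S.
Proof.
move=> x_leaf exu; rewrite !inE => /andP[/andP[_ Sconn] xS] Sx.
have [z zS zx] := set1_neq_mem xS Sx.
have [y yS exy] := induced_connected_nbr Sconn xS zS zx.
by rewrite -(leaf_nbr_uniq x_leaf exy exu).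
Qed.

Lemma card_subtrees_at_leaf x u :
  leaf e x -> e x u -> 2 * #|subtrees_at x| = 2 + #|subtrees_at u|.
Proof.
move=> x_leaf exu; have ux : u != x by apply: contraTneq exu => ->; rewrite e_irr.
pose both := [set S in subtrees e | (x \in S) && (u \in S)].
pose only_u := [set S in subtrees e | (u \in S) && (x \notin S)].
have at_x : subtrees_at x = [set x] |: both.
  apply/setP => S; rewrite in_setU1; apply/idP/idP => [Sx|].
    have [//|neq] := eqVneq S [set x].
    move: (Sx); rewrite !inE => /andP[-> ->].
    by rewrite (subtrees_at_leaf_nbr x_leaf exu Sx neq).
  by case/predU1P=> [->|]; [rewrite inE subtrees_set1 set11 | rewrite !inE => /andP[-> /andP[]]].
have ux_notin : [set x] \notin both by rewrite !inE (negbTE ux) !andbF.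
have at_u : #|subtrees_at u| = #|both| + #|only_u|.
  rewrite -(cardsID [set S : {set V} | x \in S]); congr (_ + _); apply: eq_card => S;
  by rewrite !inE; case: (x \in S); rewrite ?andbT ?andbF.
have add_x : both = [set x |: S | S in only_u].
  apply/setP => S; apply/idP/imsetP => [|[T]].
    rewrite inE => /andP[Ssub /andP[xS uS]]; exists (S :\ x); last by rewrite setD1K.
    rewrite inE in_setD1 ux uS setD11 !andbT; apply: subtrees_setD Ssub uS _.
      by move=> y a b; rewrite in_set1 => /eqP-> _ _; exact: leaf_nbr_uniq x_leaf.
    by rewrite in_set1.
  rewrite inE => /andP[Tsub /andP[uT _]] ->.
  by rewrite inE (subtrees_setU1 Tsub uT) ?setU11 ?setU1r // e_sym.
have only_u_both : #|only_u| = #|both|.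
  rewrite add_x card_in_imset // => S T; rewrite !inE => /andP[_ /andP[_ xS]] /andP[_ /andP[_ xT]] STx.
  by rewrite -(setU1K xS) STx setU1K.
by rewrite at_x cardsU1 ux_notin at_u only_u_both; lia.
Qed.

Definition leaf_nbrs (v : V) := [set u | e v u & leaf e u].

Definition subtrees_at_avoid (v : V) (Y : {set V}) := [set S in subtrees_at v | [disjoint S & Y]].

Lemma in_subtrees_at_avoid v (Y : {set V}) S :
  (S \in subtrees_at_avoid v Y) = [&& S \in subtrees e, v \in S & [disjoint S & Y]].
Proof. by rewrite !inE andbA. Qed.

(* [S] is determined by the subtree [S :\: Y] and the subset [S :&: Y] of [Y]. *)
Lemma card_subtrees_at_le v (Y : {set V}) :
  (forall y, y \in Y -> leaf e y) -> v \notin Y ->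
  #|subtrees_at v| <= #|subtrees_at_avoid v Y| * 2 ^ #|Y|.
Proof.
move=> Y_leaf vY; rewrite -card_powerset -cardsX.
have split_inj : {in subtrees_at v &, injective (fun S => (S :\: Y, S :&: Y))}.
  by move=> S T _ _ [SDY SIY]; rewrite -(setID S Y) -(setID T Y) SDY SIY.
rewrite -(card_in_imset split_inj); apply/subset_leq_card/subsetP => _ /imsetP[S + ->].
rewrite inE => /andP[Ssub vS]; rewrite in_setX /= powersetE subsetIr andbT inE.
rewrite [_ \in subtrees_at v]inE (subtrees_setD _ Ssub vS vY) ?in_setD ?vY ?vS.
  by rewrite disjoints_subset setDE subsetIr.
by move=> y a b /Y_leaf y_leaf _ _; apply: leaf_nbr_uniq.
Qed.

Lemma leaf_nbrsP v u : reflect (e v u /\ leaf e u) (u \in leaf_nbrs v).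
Proof. by rewrite inE; apply: andP. Qed.

Lemma notin_leaf_nbrs v : v \notin leaf_nbrs v.
Proof. by rewrite inE e_irr. Qed.

Definition internal_nbrs (v : V) := [set u | e v u & ~~ leaf e u].

Lemma deg_leaf_internal_nbrs v : deg e v = #|leaf_nbrs v| + #|internal_nbrs v|.
Proof.
rewrite /deg -(cardsID [set u | leaf e u] [set u | e v u]).
by congr (_ + _); apply: eq_card => u; rewrite /leaf_nbrs /internal_nbrs !inE // andbC.
Qed.

Lemma set1_subtrees_at_avoid v (Y : {set V}) : v \notin Y -> [set v] \in subtrees_at_avoid v Y.
Proof. by move=> vY; rewrite in_subtrees_at_avoid subtrees_set1 set11 disjoints1. Qed.

(* Besides the subtrees through [v], there are the singletons of its leaf
   neighbours and the subtrees through its unique internal neighbour obtained by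
   deleting [v] from a subtree avoiding the leaf neighbours. *)
Lemma card_subtrees_at_twig v :
  #|internal_nbrs v| <= 1 ->
  #|leaf_nbrs v| + #|subtrees_at v| + #|subtrees_at_avoid v (leaf_nbrs v)|
    <= #|subtrees e| + 1.
Proof.
move=> /card_le1_eqP internal_uniq; set X := leaf_nbrs v; set A := subtrees_at_avoid v X.
pose singles := [set [set x] | x in X].
pose cut := [set S :\ v | S in A :\ [set v]].
have vA : [set v] \in A by apply/set1_subtrees_at_avoid/notin_leaf_nbrs.
have card_cut : #|cut| = #|A| - 1.
  rewrite card_in_imset ?(cardsD1 [set v] A) ?vA ?add1n ?subn1 // => S T.
  rewrite !in_setD1 !in_subtrees_at_avoid => /and4P[_ _ vS _] /and4P[_ _ vT _] STv.
  by rewrite -(setD1K vS) STv setD1K.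
have d1 : [disjoint singles & subtrees_at v].
  rewrite disjoint_subset; apply/subsetP => _ /imsetP[x xX ->]; rewrite !inE negb_and.
  by apply/orP; right; apply: contraTneq xX => <-; apply: notin_leaf_nbrs.
have d2 : [disjoint singles :|: subtrees_at v & cut].
  rewrite disjoint_sym disjoint_subset; apply/subsetP => _ /imsetP[S + ->].
  rewrite in_setD1 in_subtrees_at_avoid => /andP[_ /and3P[_ vS SX]].
  rewrite inE in_setU negb_or [_ \in subtrees_at v]inE setD11 andbF andbT.
  apply/imsetP => -[x xX Sx].
  have: x \in S :\ v by rewrite Sx set11.
  by rewrite in_setD1 => /andP[_ xS]; rewrite (disjointFr SX xS) in xX.
have sub : singles :|: subtrees_at v :|: cut \subset subtrees e.
  apply/subsetP => S; rewrite !in_setU => /orP[/orP[/imsetP[x _ ->]|]|/imsetP[T]].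
  - exact: subtrees_set1.
  - by rewrite inE => /andP[].
  rewrite in_setD1 in_subtrees_at_avoid => /andP[Tv /and3P[Tsub vT TX]] ->.
  have [z zT zv] := set1_neq_mem vT Tv.
  apply: subtrees_setD Tsub zT _; last by rewrite in_set1.
  have internal w : w \in T -> e v w -> w \in internal_nbrs v.
    move=> wT vw; rewrite inE vw; apply: contraTN wT => w_leaf.
    by rewrite (disjointFl TX) //; apply/leaf_nbrsP.
  by move=> y a b; rewrite in_set1 => /eqP-> aT bT va vb; apply: internal_uniq; apply: internal.
have A_gt0 : 0 < #|A| by apply/card_gt0P; exists [set v].
have := subset_leq_card sub.
rewrite !cardsU_disjoint // card_cut card_imset; last exact: set1_inj.
by rewrite -(leq_add2r 1) -addnA subnK.
Qed.

Lemma card_leaf_nbrs_subtrees_at v :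
  #|internal_nbrs v| <= 1 -> #|leaf_nbrs v| + #|subtrees_at v| <= #|subtrees e|.
Proof.
move=> internal_le1; have := card_subtrees_at_twig internal_le1.
have : 0 < #|subtrees_at_avoid v (leaf_nbrs v)|.
  by apply/card_gt0P; exists [set v]; apply/set1_subtrees_at_avoid/notin_leaf_nbrs.
lia.
Qed.

Lemma card_subtrees_at_twig_ratio v :
  #|internal_nbrs v| <= 1 -> 0 < #|leaf_nbrs v| ->
  #|subtrees_at v| * (2 ^ #|leaf_nbrs v| + 1) <= 2 ^ #|leaf_nbrs v| * #|subtrees e|.
Proof.
move=> internal_le1 X_gt0.
have Y_leaf y : y \in leaf_nbrs v -> leaf e y by case/leaf_nbrsP.
(* With [a] subtrees avoiding the leaf neighbours: [c <= a 2^p] and [c + a <= N]. *)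
have := card_subtrees_at_le Y_leaf (notin_leaf_nbrs v).
have := card_subtrees_at_twig internal_le1; nia.
Qed.

End Subtrees.

Lemma sum_card_subtrees (V : finType) (e : rel V) :
  \sum_(S in subtrees e) #|S| = \sum_v #|subtrees_at e v|.
Proof.
under eq_bigr => S _ do rewrite -sum1_card.
rewrite (exchange_big_dep predT) //=; apply: eq_bigr => v _.
by rewrite -sum1_card; apply: eq_bigl => S; rewrite !inE.
Qed.

Lemma sum_deg (V : finType) (e : rel V) :
  \sum_v deg e v = #|[set p : V * V | e p.1 p.2]|.
Proof.
under eq_bigr => v _ do rewrite /deg -sum1_card.
by rewrite pair_big_dep -sum1_card; apply: eq_bigl => -[x y]; rewrite !inE.
Qed.

Lemma sum_leaf_nbrs_weighted (V : finType) (e : rel V) (f : V -> nat) :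
  symmetric e ->
  \sum_(x | leaf e x) \sum_(u | e x u) f u = \sum_u #|leaf_nbrs e u| * f u.
Proof.
move=> e_sym; rewrite (exchange_big_dep predT) //=; apply: eq_bigr => u _.
by rewrite -sum_nat_const; apply: eq_bigl => x; rewrite !inE e_sym andbC.
Qed.

Section Tree.

Variables (V : finType) (e : rel V).
Hypotheses (e_sym : symmetric e) (e_irr : irreflexive e).
Hypotheses (e_conn : forall x y, connect e x y) (V_gt2 : 2 < #|V|).

Let V_gt1 : 1 < #|V|. Proof. exact: ltnW. Qed.

Lemma in_closed_set (A : {pred V}) x y :
  (forall a b, e a b -> a \in A -> b \in A) -> x \in A -> y \in A.
Proof. by move=> A_closed; rewrite (closed_connect (intro_closed (sym_connect_sym e_sym) A_closed) (e_conn x y)). Qed.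

Lemma exists_nbr x : exists u, e x u.
Proof.
have /card_gt0P[z] : 0 < #|[set~ x]| by rewrite cardsC1; lia.
rewrite in_setC1; case: (pickP (e x)) => [u exu _|no_nbr zx]; first by exists u.
suff : z \in pred1 x by rewrite inE (negbTE zx).
apply: (@in_closed_set _ x); last by rewrite inE.
by move=> a b eab /eqP ax; rewrite ax no_nbr in eab.
Qed.

Lemma leaf_nbr_nonleaf x u : leaf e x -> e x u -> ~~ leaf e u.
Proof.
move=> x_leaf exu; apply/negP => u_leaf.
have /card_gt0P[z] : 0 < #|[set~ x] :\ u|.
  by have := cardsD1 u [set~ x]; rewrite cardsC1; have := leq_b1 (u \in [set~ x]); lia.
rewrite !inE => /andP[zu zx].
suff : z \in [pred a | (a == x) || (a == u)] by rewrite inE (negbTE zx) (negbTE zu).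
apply: (@in_closed_set _ x); last by rewrite inE eqxx.
move=> a b eab /orP[]/eqP a_end; rewrite a_end in eab.
  by rewrite inE (leaf_nbr_uniq x_leaf eab exu) eqxx orbT.
by rewrite inE (leaf_nbr_uniq u_leaf eab (_ : e u x)) ?eqxx // e_sym.
Qed.

Lemma deg_leaf x : leaf e x -> deg e x = 1.
Proof.
move=> x_leaf; have [u exu] := exists_nbr x.
by apply/anti_leq; rewrite [_ <= 1]x_leaf; apply/card_gt0P; exists u; rewrite inE.
Qed.

Lemma star_vertex v : (forall u, e v u -> leaf e u) -> forall x, (x == v) || e v x.
Proof.
move=> v_star x; suff : x \in [pred a | (a == v) || e v a] by [].
apply: (@in_closed_set _ v); last by rewrite inE eqxx.
move=> a b eab /orP[/eqP<-|eva]; first by rewrite inE eab orbT.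
by rewrite inE (leaf_nbr_uniq (v_star a eva) eab (_ : e a v)) ?eqxx // e_sym.
Qed.

Definition leaves := [set x | leaf e x].

Lemma card_leaf_nbrs_leaf x : leaf e x -> #|leaf_nbrs e x| = 0.
Proof.
move=> x_leaf; apply/eqP; rewrite cards_eq0; apply/eqP/setP => u; rewrite !inE.
by apply/andP => -[exu]; apply/negP; apply: leaf_nbr_nonleaf exu.
Qed.

Lemma sum_nbr_leaf x u (f : V -> nat) : leaf e x -> e x u -> \sum_(w | e x w) f w = f u.
Proof.
move=> x_leaf exu; rewrite (big_pred1 u) // => w.
by apply/idP/eqP => [exw|->//]; apply: leaf_nbr_uniq x_leaf exw exu.
Qed.

Lemma sum_card_leaf_nbrs : \sum_v #|leaf_nbrs e v| = #|leaves|.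
Proof.
under eq_bigr => v _ do rewrite -[#|_|]muln1.
rewrite -(sum_leaf_nbrs_weighted (fun=> 1)) // -sum1_card; apply: eq_big => [x|x x_leaf].
  by rewrite inE.
by have [u exu] := exists_nbr x; rewrite (sum_nbr_leaf _ x_leaf exu).
Qed.

Lemma sum_leaves_const k : \sum_(x | leaf e x) k = #|leaves| * k.
Proof. by rewrite -sum_nat_const; apply: eq_bigl => x; rewrite inE. Qed.

Lemma double_sum_card_subtrees :
  2 * \sum_(S in subtrees e) #|S| =
  2 * #|leaves| + \sum_(v | ~~ leaf e v) #|subtrees_at e v| * (#|leaf_nbrs e v| + 2).
Proof.
have leaf_part : 2 * \sum_(x | leaf e x) #|subtrees_at e x| =
    2 * #|leaves| + \sum_(v | ~~ leaf e v) #|leaf_nbrs e v| * #|subtrees_at e v|.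
  rewrite big_distrr /=.
  transitivity (\sum_(x | leaf e x) (2 + \sum_(u | e x u) #|subtrees_at e u|)).
    apply: eq_bigr => x x_leaf; have [u exu] := exists_nbr x.
    by rewrite (sum_nbr_leaf _ x_leaf exu) (card_subtrees_at_leaf e_sym e_irr x_leaf exu).
  rewrite big_split /= sum_leaves_const mulnC sum_leaf_nbrs_weighted //.
  by rewrite (bigID (leaf e)) /= big1 ?add0n // => u u_leaf; rewrite card_leaf_nbrs_leaf.
rewrite sum_card_subtrees (bigID (leaf e)) /= mulnDr leaf_part -addnA big_distrr -big_split /=.
by congr (_ + _); apply: eq_bigr => v _; ring.
Qed.

Lemma exists_internal : exists v, ~~ leaf e v.
Proof.
have /card_gt0P[x _] : 0 < #|V| by lia.
have [u exu] := exists_nbr x.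
by case x_leaf: (leaf e x); [exists u; apply: leaf_nbr_nonleaf exu | exists x; rewrite x_leaf].
Qed.

(* The singletons and the subtrees [{x, u}] with [x] a leaf are [n + L]
   distinct subtrees, and some vertex is not a leaf. *)
Lemma leaves_lt_half_subtrees : 2 * #|leaves| < #|subtrees e|.
Proof.
pose nbr x := odflt x [pick u | e x u].
have nbrP x : e x (nbr x).
  by rewrite /nbr; case: pickP => [//|no_nbr]; have [u] := exists_nbr x; rewrite no_nbr.
pose singles := [set [set x] | x : V].
pose pairs := [set [set x; nbr x] | x in leaves].
have card_pairs : #|pairs| = #|leaves|.
  apply: card_in_imset => x y; rewrite !inE => x_leaf y_leaf xy.
  have : x \in [set y; nbr y] by rewrite -xy set21.
  rewrite !inE => /orP[/eqP//|/eqP x_nbr].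
  by have := leaf_nbr_nonleaf y_leaf (nbrP y); rewrite -x_nbr x_leaf.
have disj : [disjoint singles & pairs].
  rewrite disjoint_subset; apply/subsetP => _ /imsetP[z _ ->]; apply/negP => /imsetP[x _ zx].
  have : nbr x \in [set z] by rewrite zx set22.
  have : x \in [set z] by rewrite zx set21.
  by rewrite !in_set1 => /eqP<- /eqP nbr_x; have := nbrP x; rewrite nbr_x e_irr.
have sub : singles :|: pairs \subset subtrees e.
  apply/subsetP => _ /setUP[/imsetP[x _ ->]|/imsetP[x _ ->]]; first exact: subtrees_set1.
  by apply: (subtrees_setU1 e_sym (subtrees_set1 _ (nbr x)) (set11 _)); rewrite e_sym.
have [v v_internal] := exists_internal.
have leaves_lt : #|leaves| < #|V|.
  by rewrite -(cardsC leaves) -addn1 leq_add2l card_gt0; apply/set0Pn; exists v; rewrite !inE.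
apply: leq_trans (subset_leq_card sub).
by rewrite cardsU_disjoint // card_pairs card_imset ?mul2n -?addnn ?ltn_add2r //; apply: set1_inj.
Qed.

Lemma sum_internal_weight :
  #|[set p : V * V | e p.1 p.2]| = 2 * (#|V| - 1) ->
  \sum_(v | ~~ leaf e v) (1 + 2 * #|leaf_nbrs e v| + deg e v) = 3 * #|V| - 2.
Proof.
move=> edges.
have total : \sum_v (1 + 2 * #|leaf_nbrs e v| + deg e v) = #|V| + 2 * #|leaves| + 2 * (#|V| - 1).
  by rewrite big_split [in LHS]big_split -big_distrr sum_card_leaf_nbrs sum_deg edges sum1_card.
have leaf_part : \sum_(v | leaf e v) (1 + 2 * #|leaf_nbrs e v| + deg e v) = #|leaves| * 2.
  by rewrite -sum_leaves_const; apply: eq_bigr => x x_leaf; rewrite card_leaf_nbrs_leaf ?deg_leaf.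
by move: total; rewrite (bigID (leaf e)) /= leaf_part; lia.
Qed.

End Tree.

Lemma twig_weight_ineq p : 2 <= p -> 10 * 2 ^ p * (p + 2) <= (15 * p + 2) * (2 ^ p + 1).
Proof.
case: p => [|[|[|[|p]]]] //= _; have : 10 * (p.+4 + 2) <= 15 * p.+4 + 2 by lia.
by move=> /(leq_mul (leqnn (2 ^ p.+4))); nia.
Qed.

Lemma star_ineq L c N t :
  3 <= L -> L + c <= N -> t <= 1 -> 20 * L + 10 * (c * (L + 2)) + 8 * t * N < 15 * (L + 1) * N.
Proof. nia. Qed.

Section OrderBound.

Variables (V : finType) (e : rel V).
Hypotheses (e_sym : symmetric e) (e_irr : irreflexive e) (e_conn : forall x y, connect e x y).
Hypothesis internal_deg : forall v, ~~ leaf e v -> 3 <= deg e v.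

Lemma internal_vertex_bound v : ~~ leaf e v -> 0 < #|internal_nbrs e v| ->
  10 * (#|subtrees_at e v| * (#|leaf_nbrs e v| + 2)) + 8 * twig e v * #|subtrees e|
    <= 5 * (1 + 2 * #|leaf_nbrs e v| + deg e v) * #|subtrees e|.
Proof.
move=> v_internal internal_gt0; have d3 := internal_deg v_internal.
have c_le : #|subtrees_at e v| <= #|subtrees e|.
  by apply/subset_leq_card/subsetP => S; rewrite inE => /andP[].
case: (boolP (twig e v)) => [/andP[_ twig_v]|_]; last by rewrite muln0 mul0n addn0; nia.
rewrite -/(leaf_nbrs e v) in twig_v; have d_split := deg_leaf_internal_nbrs e v.
have internal_le1 : #|internal_nbrs e v| <= 1 by lia.
have p_ge2 : 2 <= #|leaf_nbrs e v| by lia.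
have ratio := card_subtrees_at_twig_ratio e_sym e_irr internal_le1 (ltnW p_ge2).
(* Multiply [ratio] by [10 (p + 2)] and compare with [twig_weight_ineq]. *)
have := twig_weight_ineq p_ge2.
nia.
Qed.

Hypothesis V_gt3 : 3 < #|V|.
Hypothesis edges : #|[set p : V * V | e p.1 p.2]| = 2 * (#|V| - 1).

Let V_gt2 : 2 < #|V|. Proof. exact: ltnW. Qed.

Lemma num_twigs_internal : num_twigs e = \sum_(v | ~~ leaf e v) twig e v.
Proof.
rewrite /num_twigs -sum1_card big_mkcond [RHS]big_mkcond; apply: eq_bigr => v _.
by rewrite inE /leaf; case: (boolP (twig e v)) => [/andP[d2 _]|]; rewrite ?if_same // -ltnNge d2.
Qed.

Lemma sum_card_subtrees_lt_nonstar : (forall v, ~~ leaf e v -> 0 < #|internal_nbrs e v|) ->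
  20 * \sum_(S in subtrees e) #|S| + 8 * num_twigs e * #|subtrees e|
    < 15 * #|V| * #|subtrees e|.
Proof.
move=> internal_gt0.
have : \sum_(v | ~~ leaf e v) (10 * (#|subtrees_at e v| * (#|leaf_nbrs e v| + 2)) +
                                8 * twig e v * #|subtrees e|) <=
       \sum_(v | ~~ leaf e v) 5 * (1 + 2 * #|leaf_nbrs e v| + deg e v) * #|subtrees e|.
  by apply: leq_sum => v v_internal; apply: internal_vertex_bound v_internal (internal_gt0 v v_internal).
rewrite big_split /= -!big_distrl -!big_distrr /= sum_internal_weight // -num_twigs_internal.
have leaves_lt := leaves_lt_half_subtrees e_sym e_irr e_conn V_gt2.
have sum2 := double_sum_card_subtrees e_sym e_irr e_conn V_gt2.
rewrite -[20]/(10 * 2) -[10 * 2 * _]mulnA sum2.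
set internal_sum := \sum_(v | ~~ leaf e v) _.
set N := #|subtrees e|; set L := #|leaves e|; set n := #|V|.
nia.
Qed.

Lemma sum_card_subtrees_lt_star w : ~~ leaf e w -> #|internal_nbrs e w| = 0 ->
  20 * \sum_(S in subtrees e) #|S| + 8 * num_twigs e * #|subtrees e|
    < 15 * #|V| * #|subtrees e|.
Proof.
move=> w_internal internal0.
have w_star u : e w u -> leaf e u.
  move=> ewu; apply: contraT => u_internal; move/eqP: internal0; rewrite cards_eq0.
  by move/eqP/setP/(_ u); rewrite !inE ewu u_internal.
have internal_eq x : ~~ leaf e x = (x == w).
  have /orP[/eqP->|ewx] := star_vertex e_sym e_conn w_star x; first by rewrite eqxx.
  by rewrite w_star //; apply/esym/eqP => xw; rewrite xw e_irr in ewx.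
have internal_sum (F : V -> nat) : \sum_(v | ~~ leaf e v) F v = F w by apply: big_pred1.
have p_w : #|leaf_nbrs e w| = #|leaves e|.
  rewrite -(sum_card_leaf_nbrs e_sym e_conn V_gt2) (bigID (leaf e)) /= internal_sum big1 // => x.
  exact: card_leaf_nbrs_leaf.
have n_eq : #|V| = #|leaves e| + 1.
  rewrite -(cardsC (leaves e)) -(cards1 w); congr (_ + _); apply: eq_card => x.
  by rewrite !inE internal_eq.
have t_le1 : num_twigs e <= 1 by rewrite num_twigs_internal internal_sum leq_b1.
have internal_le1 : #|internal_nbrs e w| <= 1 by rewrite internal0.
have := card_leaf_nbrs_subtrees_at e_sym e_irr internal_le1; rewrite p_w => leaf_nbrs_add.
have := double_sum_card_subtrees e_sym e_irr e_conn V_gt2.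
rewrite internal_sum p_w => sum2.
rewrite -[20]/(10 * 2) -[10 * 2 * _]mulnA sum2 n_eq mulnDr mulnA.
apply: star_ineq => //; lia.
Qed.

Lemma sum_card_subtrees_lt :
  20 * \sum_(S in subtrees e) #|S| + 8 * num_twigs e * #|subtrees e|
    < 15 * #|V| * #|subtrees e|.
Proof.
have [/existsP[w /andP[w_internal /eqP internal0]]|/existsPn no_star] :=
  boolP [exists w, ~~ leaf e w && (#|internal_nbrs e w| == 0)].
  exact: sum_card_subtrees_lt_star w_internal internal0.
apply: sum_card_subtrees_lt_nonstar => v v_internal; rewrite lt0n.
by have := no_star v; rewrite v_internal.
Qed.

End OrderBound.

Lemma induced_connected_setT_connect (V : finType) (e : rel V) :
  induced_connected e [set: V] -> forall x y, connect e x y.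
Proof.
move=> /induced_connectedP conn x y; apply: connect_sub (conn x y _ _) => // a b.
by case/and3P => eab _ _; apply: connect1.
Qed.

Theorem mainTheorem7 (V : finType) (e : rel V) :
  in_T3 e -> 4 <= #|V| ->
  (mu e < (3 * #|V|)%:R / 4%:R - (2 * num_twigs e)%:R / 5%:R)%R.
Proof.
move=> [[[e_sym e_irr] [_ [/induced_connected_setT_connect e_conn edges]]] [_ T3]] V_gt3.
have internal_deg v : ~~ leaf e v -> 3 <= deg e v by rewrite /leaf -ltnNge; apply: T3.
have N_gt0 : (0 < #|subtrees e|)%N.
  have /card_gt0P[x _] : (0 < #|V|)%N by lia.
  by apply/card_gt0P; exists [set x]; apply: subtrees_set1.
have := sum_card_subtrees_lt e_sym e_irr e_conn internal_deg V_gt3 edges.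
rewrite /mu ltr_pdivrMr ?ltr0n // -(ltr_nat rat) !natrD !natrM.
lra.
Qed.
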